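(* Let $\mathcal{Y}$ be an outcome space and, for each $s=(s^{(1)},\dots,s^{(n)})^\intercal\in\mathbb{R}^n$, let $f(\cdot\mid s)$ be a probability mass function (or density) on $\mathcal{Y}$ such that $f(y\mid s)$ is twice differentiable in $s$, its support does not depend on $s$, $s\mapsto\ln f(y\mid s)$ is strictly concave for each $y$ in the support, and differentiation with respect to $s$ and integration (summation) over $y$ of $f(y\mid s)$ are interchangeable. For $r\in\mathbb{R}^n$ define the score $\nabla_i(r;y)=\partial \ln f(y\mid r)/\partial r^{(i)}$. Let $s\in\mathbb{R}^n$ (true skills) and $r\in\mathbb{R}^n$ (ratings) satisfy $r^{(j)}=s^{(j)}$ for all $j\neq i$, and let $Y$ have distribution $f(\cdot\mid s)$. Then $\mathrm{E}[\nabla_i(r;Y)\mid s]$ has the same sign as $s^{(i)}-r^{(i)}$ (positive, zero, or negative).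
   Context: Each player $i$ has an unobserved true skill $s^{(i)}$; game outcomes are generated by $f(\cdot\mid s)$, while ratings $r$ are updated by the score-driven rule $r_{t+1}^{(i)}=r_t^{(i)}+K\nabla_i(r_t;y_t)$, $K>0$, without knowledge of $s$. Expectations are with respect to $Y\sim f(\cdot\mid s)$. *)

From HB Require Import structures.
From mathcomp Require Import all_boot all_order all_algebra.
From mathcomp Require Import all_classical all_reals all_analysis.
Set Implicit Arguments. Unset Strict Implicit. Unset Printing Implicit Defensive.
Import Order.TTheory GRing.Theory Num.Theory.
Import numFieldNormedType.Exports.
Local Open Scope classical_set_scope.
Local Open Scope ring_scope.

Definition unitv {R : realType} {n : nat} (i : 'I_n) : 'rV[R]_n := delta_mx 0 i.

Definition partial {R : realType} {n : nat} (i : 'I_n) (g : 'rV[R]_n -> R)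
  (x : 'rV[R]_n) : R := 'D_(unitv i) g x.

Definition twice_differentiable {R : realType} {n : nat} (g : 'rV[R]_n -> R) :=
  forall x, differentiable g x /\
    forall i : 'I_n, differentiable (partial i g) x.

Definition strictly_concave {R : realType} {n : nat} (g : 'rV[R]_n -> R) :=
  forall a b : 'rV[R]_n, a != b -> forall t : R, 0 < t < 1 ->
    (1 - t) * g a + t * g b < g ((1 - t) *: a + t *: b).

Definition score {R : realType} {Y : Type} {n : nat}
  (f : Y -> 'rV[R]_n -> R) (i : 'I_n) (r : 'rV[R]_n) (y : Y) : R :=
  partial i (fun r' => ln (f y r')) r.

(* Standing assumptions on the family of densities f(. | s) w.r.t. a
   reference measure mu on the outcome space Y (counting measure for pmfs). *)
Definition regular_model {R : realType} {d : measure_display}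
  {Y : measurableType d} (mu : {measure set Y -> \bar R}) {n : nat}
  (f : Y -> 'rV[R]_n -> R) : Prop :=
  (forall y s, 0 <= f y s) /\
      (forall s, measurable_fun setT (fun y => f y s)) /\
      (forall s, (\int[mu]_y (f y s)%:E = 1)%E) /\
      (forall y, twice_differentiable (f y)) /\
      (forall y s s', (0 < f y s) = (0 < f y s')) /\
      (forall y s, 0 < f y s -> strictly_concave (fun s' => ln (f y s'))) /\
      (forall s (i : 'I_n),
         mu.-integrable setT (fun y => (partial i (f y) s)%:E) /\
         is_derive s (unitv i) (fun s' => Rintegral mu setT (fun y => f y s'))
                   (Rintegral mu setT (fun y => partial i (f y) s))).

From HB Require Import structures.
From mathcomp Require Import all_boot all_order all_algebra.
From mathcomp Require Import all_classical all_reals all_analysis.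
From mathcomp Require Import ring lra measurable_realfun.
Set Implicit Arguments. Unset Strict Implicit. Unset Printing Implicit Defensive.
Import Order.TTheory GRing.Theory Num.Theory.
Import numFieldNormedType.Exports.
Local Open Scope classical_set_scope.
Local Open Scope ring_scope.

(* Differentiating [\int f(y | s) dy = 1] in [s] shows that the score at the
   true skills has mean zero: [f(y | s) * score(s; y) = d_i f(y | s)] integrates
   to [0].  Strict concavity of [ln f(y | .)] makes the score strictly
   decreasing along the [i]-th axis, and [r] differs from [s] only along that
   axis; hence on the support of [f(. | s)] the integrand [f(y | s) * score(r; y)]
   lies strictly above (resp. below) [d_i f(y | s)] when [r_i < s_i]
   (resp. [r_i > s_i]), and it coincides with it off the support.  The support
   carries probability one, so the integral inequality is strict. *)

Section strictly_concave_derive.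
Variable R : realType.
Implicit Types (psi : R -> R) (a b m delta : R).

Definition strictly_concave1 psi := forall x y t, x != y -> 0 < t < 1 ->
  (1 - t) * psi x + t * psi y < psi ((1 - t) * x + t * y).

Lemma derive1_right_lower_bound psi a m delta :
  derivable psi a 1 -> 0 < delta ->
  (forall h, 0 < h < delta -> m <= (psi (a + h) - psi a) / h) ->
  m <= 'D_1 psi a.
Proof.
move=> dpsi delta0 slope_ge.
have right_dnbhs : (0 : R)^'+ `=>` 0^'.
  by apply: within_subset => h /gt_eqF ->.
apply: (cvgr_to_ge (cvg_trans (cvg_app _ right_dnbhs) dpsi)).
near=> h; rewrite /= [_ *: _]mulrC scaler1 (addrC h).
by apply: slope_ge; apply/andP; split; near: h;
  [exact: nbhs_right_gt | exact: nbhs_right_lt].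
Unshelve. all: by end_near. Qed.

Lemma derive1_left_upper_bound psi b m delta :
  derivable psi b 1 -> 0 < delta ->
  (forall h, 0 < h < delta -> (psi b - psi (b - h)) / h <= m) ->
  'D_1 psi b <= m.
Proof.
move=> dpsi delta0 slope_le.
have left_dnbhs : (0 : R)^'- `=>` 0^'.
  by apply: within_subset => h /lt_eqF ->.
apply: (cvgr_to_le (cvg_trans (cvg_app _ left_dnbhs) dpsi)).
near=> h; rewrite /= [_ *: _]mulrC scaler1 (addrC h).
have h_lt0 : h < 0 by near: h; exact: nbhs_left_lt.
have h_gt : - delta < h by near: h; apply: nbhs_left_gt; rewrite oppr_lt0.
have := slope_le (- h); rewrite oppr_gt0 h_lt0 ltrNl h_gt opprK => /(_ isT).
by rewrite invrN mulrN -mulNr opprB.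
Unshelve. all: by end_near. Qed.

Lemma strictly_concave1_three_chord psi x y z :
  strictly_concave1 psi -> x < y < z ->
  (psi z - psi y) / (z - y) < (psi z - psi x) / (z - x) /\
  (psi z - psi x) / (z - x) < (psi y - psi x) / (y - x).
Proof.
move=> conc /andP[xy yz].
have [zx0 zy0 yx0] : [/\ 0 < z - x, 0 < z - y & 0 < y - x] by split; lra.
pose t := (y - x) / (z - x).
have t01 : 0 < t < 1.
  rewrite /t ltr_pdivrMr // mul1r divr_gt0 //=; lra.
have := conc x z t (negbT (lt_eqF (lt_trans xy yz))) t01.
have -> : (1 - t) * x + t * z = y by rewrite /t; field; lra.
have -> : 1 - t = (z - y) / (z - x) by rewrite /t; field; lra.
rewrite /t => chord.
pose gap := (z - x) * psi y - (z - y) * psi x - (y - x) * psi z.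
have gap_gt0 : 0 < gap.
  have -> : gap = (psi y - ((z - y) / (z - x) * psi x + (y - x) / (z - x) * psi z))
                  * (z - x) by rewrite /gap; field; lra.
  by rewrite mulr_gt0 // subr_gt0.
split; rewrite -subr_gt0.
- have -> : (psi z - psi x) / (z - x) - (psi z - psi y) / (z - y) =
    gap / ((z - x) * (z - y)) by rewrite /gap; field; lra.
  by rewrite divr_gt0 ?mulr_gt0.
- have -> : (psi y - psi x) / (y - x) - (psi z - psi x) / (z - x) =
    gap / ((z - x) * (y - x)) by rewrite /gap; field; lra.
  by rewrite divr_gt0 ?mulr_gt0.
Qed.

Lemma strictly_concave1_derive1_decr psi a b :
  strictly_concave1 psi -> (forall x, derivable psi x 1) -> a < b ->
  'D_1 psi b < 'D_1 psi a.
Proof.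
move=> conc dpsi ab; pose c := (a + b) / 2.
have [ac cb] : a < c /\ c < b by rewrite /c; split; lra.
have Db_le : 'D_1 psi b <= (psi b - psi c) / (b - c).
  apply: (derive1_left_upper_bound (delta := b - c) (dpsi b)).
    by rewrite subr_gt0.
  move=> h /andP[h0 hbc].
  have [+ _] := strictly_concave1_three_chord conc (ltac:(lra) : c < b - h < b).
  by rewrite subKr => /ltW.
have Da_ge : (psi c - psi a) / (c - a) <= 'D_1 psi a.
  apply: (derive1_right_lower_bound (delta := c - a) (dpsi a)).
    by rewrite subr_gt0.
  move=> h /andP[h0 hca].
  have [_] := strictly_concave1_three_chord conc (ltac:(lra) : a < a + h < c).
  by rewrite [a + h]addrC addrK => /ltW.
have [chord_cb chord_ab] := strictly_concave1_three_chord conc (introT andP (conj ac cb)).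
apply: (le_lt_trans Db_le); apply: (lt_le_trans _ Da_ge).
exact: lt_trans chord_cb chord_ab.
Qed.

End strictly_concave_derive.

Section directional_derivatives.
Variables (R : realType) (n : nat).
Implicit Types (G : 'rV[R]_n -> R) (e x : 'rV[R]_n).

Lemma difference_quotient_line G e x (t : R) :
  (fun h : R => h^-1 *: (((fun u : R => G (u *: e + x)) \o shift t) (h *: 1)
                          - G (t *: e + x)))
  = (fun h : R => h^-1 *: ((G \o shift (t *: e + x)) (h *: e) - G (t *: e + x))).
Proof.
apply/funext => h /=; have -> : h *: (1 : R) = h by rewrite /GRing.scale /= mulr1.
by rewrite scalerDl addrA.
Qed.

Lemma derivable_line G e x (t : R) :
  derivable (fun u : R => G (u *: e + x)) t 1 = derivable G (t *: e + x) e.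
Proof. by rewrite /derivable difference_quotient_line. Qed.

Lemma derive_line G e x (t : R) :
  'D_1 (fun u : R => G (u *: e + x)) t = 'D_e G (t *: e + x).
Proof. by rewrite /derive difference_quotient_line. Qed.

Lemma strictly_concave_line G e x : e != 0 -> strictly_concave G ->
  strictly_concave1 (fun u : R => G (u *: e + x)).
Proof.
move=> e0 conc u1 u2 t u12 t01.
have points_neq : u1 *: e + x != u2 *: e + x.
  by rewrite (can_eq (addrK x)) -subr_eq0 -scalerBl scaler_eq0 subr_eq0 negb_or u12.
have := conc _ _ points_neq t t01.
by rewrite !scalerDr !scalerA addrACA -!scalerDl subrK scale1r.
Qed.

Lemma strictly_concave_derive_decr G e x (a b : R) :
  strictly_concave G -> (forall z, differentiable G z) -> e != 0 -> a < b ->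
  'D_e G (b *: e + x) < 'D_e G (a *: e + x).
Proof.
move=> conc dG e0 ab; rewrite -!derive_line.
apply: strictly_concave1_derive1_decr ab; first exact: strictly_concave_line.
by move=> t; rewrite derivable_line; exact: diff_derivable.
Qed.

Lemma differentiable_ln (y : R) : 0 < y -> differentiable (@ln R) y.
Proof. by move=> y0; apply/derivable1_diffP; case: (is_derive1_ln y0). Qed.

Lemma derive_ln G x e : differentiable G x -> 0 < G x ->
  'D_e (fun z => ln (G z)) x = 'D_e G x / G x.
Proof.
move=> dG Gx0; have [_ ln_derive] := is_derive1_ln Gx0.
have dln := differentiable_ln Gx0.
rewrite (deriveE _ dG) (deriveE _ (differentiable_comp dG dln)) diff_comp //=.
set v := 'd G x e; have v1 : v *: (1 : R) = v by rewrite /GRing.scale /= mulr1.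
by rewrite -{1}v1 linearZ -deriveE // ln_derive.
Qed.

End directional_derivatives.

Lemma measurable_invr (R : realType) : measurable_fun setT (@GRing.inv R).
Proof.
rewrite -(setUv [set (0 : R)]); apply/measurable_funU => //; first exact: measurableC.
split; first exact: measurable_fun_set1.
apply: open_continuous_measurable_fun.
  by rewrite openC; apply: accessible_closed_set1; exact: hausdorff_accessible.
by move=> x; rewrite inE /= => /eqP x0; exact: (@continuousV _ _ id x x0 (fun A => id)).
Qed.

Section integral_comparison.
Context d (T : measurableType d) (R : realType) (mu : {measure set T -> \bar R}).
Local Open Scope ereal_scope.

Lemma le_measurable_integral (f g : T -> \bar R) :
  measurable_fun setT f -> measurable_fun setT g -> (forall y, f y <= g y) ->
  \int[mu]_y f y <= \int[mu]_y g y.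
Proof.
move=> mf mg fg; have fg_in : {in setT, forall y, f y <= g y} by move=> y _.
rewrite [leLHS]integralE [leRHS]integralE.
apply: leeB; apply: ge0_le_integral => //;
  do ?[exact: measurable_funepos | exact: measurable_funeneg].
- by move=> y _; exact: funepos_le (in_setT y).
- by move=> y _; exact: funeneg_le (in_setT y).
Qed.

Lemma ge0_integrable (w : T -> R) :
  measurable_fun setT w -> (forall y, (0 <= w y)%R) ->
  \int[mu]_y (w y)%:E < +oo -> mu.-integrable setT (EFin \o w).
Proof.
move=> mw w0 w_lty; apply/integrableP; split; first exact/measurable_EFinP.
by under eq_integral do rewrite /= ger0_norm //.
Qed.

Lemma integral_gt0_on_support (m w : T -> R) :
  measurable_fun setT m -> measurable_fun setT w ->
  (forall y, (0 <= m y)%R) -> (forall y, (0 <= w y)%R) ->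
  (forall y, (0 < w y)%R -> (0 < m y)%R) ->
  0 < \int[mu]_y (w y)%:E -> 0 < \int[mu]_y (m y)%:E.
Proof.
move=> mm mw m0 w0 wm; apply: contraTT; rewrite -leNgt => m_le0.
have m_eq0 : \int[mu]_y (m y)%:E = 0.
  by apply/eqP; rewrite eq_le m_le0 integral_ge0 // => y _; rewrite lee_fin.
have m_ae0 : ae_eq mu setT (EFin \o m) (cst 0).
  apply/ae_eq_integral_abs => //; first exact/measurable_EFinP.
  by rewrite -m_eq0; apply: eq_integral => y _ /=; rewrite ger0_norm.
have w_ae0 : ae_eq mu setT (EFin \o w) (cst 0).
  apply: filterS m_ae0 => y /= my0 Ty; case: (my0 Ty) => {}my0; congr EFin.
  by apply/eqP; rewrite eq_le w0 andbT leNgt; apply/negP => /wm; rewrite my0 ltxx.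
rewrite -leNgt (ae_eq_integral _ _ measurableT _ _ w_ae0) ?integral0 //.
exact/measurable_EFinP.
Qed.

(* [k] itself need not be integrable; its truncation by the density [w] is,
   and it stays positive wherever [w] is. *)
Lemma integrable_minorant_gt0 (k w : T -> R) :
  measurable_fun setT k -> (forall y, (0 <= k y)%R) ->
  mu.-integrable setT (EFin \o w) -> (forall y, (0 <= w y)%R) ->
  (forall y, (0 < w y)%R -> (0 < k y)%R) -> 0 < \int[mu]_y (w y)%:E ->
  exists2 m : T -> R,
    mu.-integrable setT (EFin \o m) /\ 0 < \int[mu]_y (m y)%:E &
    forall y, (m y <= k y)%R.
Proof.
move=> mk k0 w_int w0 wk w_gt0.
have mw : measurable_fun setT w by exact/measurable_EFinP/(measurable_int mu).
pose m y := Num.min (k y) (w y).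
have mm : measurable_fun setT m by exact: measurable_minr.
have m0 y : (0 <= m y)%R by rewrite le_min k0 w0.
exists m => [|y]; last by rewrite ge_min lexx.
split; last first.
  apply: integral_gt0_on_support mm mw m0 w0 _ w_gt0 => y wy.
  by rewrite lt_min wy wk.
apply: le_integrable w_int => //; first exact/measurable_EFinP.
by move=> y _; rewrite /= !ger0_norm // lee_fin ge_min lexx orbT.
Qed.

Lemma integral_lt_of_gt_on_support (p g w : T -> R) :
  mu.-integrable setT (EFin \o p) -> measurable_fun setT g ->
  mu.-integrable setT (EFin \o w) -> (forall y, (0 <= w y)%R) ->
  0 < \int[mu]_y (w y)%:E ->
  (forall y, (p y <= g y)%R) -> (forall y, (0 < w y)%R -> (p y < g y)%R) ->
  \int[mu]_y (p y)%:E < \int[mu]_y (g y)%:E.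
Proof.
move=> p_int mg w_int w0 w_gt0 pg pg_strict.
have mp : measurable_fun setT p by exact/measurable_EFinP/(measurable_int mu).
have [m [m_int m_gt0] m_le] : exists2 m : T -> R,
    mu.-integrable setT (EFin \o m) /\ 0 < \int[mu]_y (m y)%:E &
    forall y, (m y <= g y - p y)%R.
  apply: integrable_minorant_gt0 w_int w0 _ w_gt0.
  - exact: measurable_funB.
  - by move=> y; rewrite subr_ge0.
  - by move=> y /pg_strict; rewrite subr_gt0.
apply: (@lt_le_trans _ _ (\int[mu]_y ((p y)%:E + (m y)%:E))).
  by rewrite integralD_EFin // lteDl // integrable_fin_num.
apply: le_measurable_integral.
- apply: emeasurable_funD; first exact: measurable_int p_int.
  exact: measurable_int m_int.
- exact/measurable_EFinP.
- by move=> y; rewrite -EFinD lee_fin -lerBrDl.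
Qed.

Lemma integral_gt_of_lt_on_support (p g w : T -> R) :
  mu.-integrable setT (EFin \o p) -> measurable_fun setT g ->
  mu.-integrable setT (EFin \o w) -> (forall y, (0 <= w y)%R) ->
  0 < \int[mu]_y (w y)%:E ->
  (forall y, (g y <= p y)%R) -> (forall y, (0 < w y)%R -> (g y < p y)%R) ->
  \int[mu]_y (g y)%:E < \int[mu]_y (p y)%:E.
Proof.
move=> p_int mg w_int w0 w_gt0 gp gp_strict.
have mp : measurable_fun setT p by exact/measurable_EFinP/(measurable_int mu).
have [m [m_int m_gt0] m_le] : exists2 m : T -> R,
    mu.-integrable setT (EFin \o m) /\ 0 < \int[mu]_y (m y)%:E &
    forall y, (m y <= p y - g y)%R.
  apply: integrable_minorant_gt0 w_int w0 _ w_gt0.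
  - exact: measurable_funB.
  - by move=> y; rewrite subr_ge0.
  - by move=> y /gp_strict; rewrite subr_gt0.
apply: (@le_lt_trans _ _ (\int[mu]_y ((p y)%:E - (m y)%:E))).
  apply: le_measurable_integral.
  - exact/measurable_EFinP.
  - apply: emeasurable_funB; first exact: measurable_int p_int.
    exact: measurable_int m_int.
  - by move=> y; rewrite -EFinB lee_fin lerBrDl -lerBrDr.
rewrite integralB_EFin // lteBlDr ?lteDl ?integrable_fin_num //.
Qed.

End integral_comparison.

Section score.
Context {R : realType} {n : nat} {Y : Type} (f : Y -> 'rV[R]_n -> R).
Hypothesis f_ge0 : forall y s, 0 <= f y s.
Hypothesis f_diff : forall y s, differentiable (f y) s.
Hypothesis f_supp : forall y s s', (0 < f y s) = (0 < f y s').

Lemma eq0_off_support y s : ~~ (0 < f y s) -> f y = cst 0.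
Proof.
move=> fys; apply/funext => x; apply/eqP.
by rewrite eq_le f_ge0 andbT leNgt (f_supp y x s).
Qed.

Lemma score_quotient i r y : score f i r y = partial i (f y) r / f y r.
Proof.
have [fyr|fyr] := boolP (0 < f y r); first exact: derive_ln.
rewrite /score /partial (eq0_off_support fyr).
by rewrite (_ : (fun _ => _) = cst (ln 0)) // !derive_cst mul0r.
Qed.

Lemma density_mul_score i s y : f y s * score f i s y = partial i (f y) s.
Proof.
rewrite score_quotient; have [fys|fys] := boolP (0 < f y s).
  by rewrite mulrC divfK // gt_eqF.
by rewrite /partial (eq0_off_support fys) derive_cst mul0r.
Qed.

Hypothesis f_conc : forall y s, 0 < f y s -> strictly_concave (fun s' => ln (f y s')).

Lemma score_decr i s y (a b : R) : 0 < f y s -> a < b ->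
  score f i (b *: unitv i + s) y < score f i (a *: unitv i + s) y.
Proof.
move=> fys ab; apply: strictly_concave_derive_decr ab.
- exact: f_conc fys.
- move=> z; have fyz : 0 < f y z by rewrite (f_supp y z s).
  exact: differentiable_comp (f_diff y z) (differentiable_ln fyz).
- by apply/eqP => /matrixP /(_ 0 i); rewrite !mxE !eqxx; exact/eqP/oner_neq0.
Qed.

Lemma density_mul_score_le i s y (a b : R) : a <= b ->
  f y s * score f i (b *: unitv i + s) y <= f y s * score f i (a *: unitv i + s) y.
Proof.
rewrite le_eqVlt => /predU1P[-> // | ab].
have [fys|fys] := boolP (0 < f y s).
  by rewrite ler_pM2l //; apply/ltW/score_decr.
by rewrite (eq0_off_support fys) !mul0r.
Qed.

End score.

Lemma measurable_score (R : realType) (d : measure_display) (Y : measurableType d)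
  (n : nat) (f : Y -> 'rV[R]_n -> R) i r :
  (forall y s, 0 <= f y s) -> (forall y s, differentiable (f y) s) ->
  (forall y s s', (0 < f y s) = (0 < f y s')) ->
  measurable_fun setT (f^~ r) -> measurable_fun setT (fun y => partial i (f y) r) ->
  measurable_fun setT (score f i r).
Proof.
move=> f_ge0 f_diff f_supp f_meas p_meas.
have -> : score f i r = fun y => partial i (f y) r * (f y r)^-1.
  by apply/funext => y; rewrite score_quotient.
apply: measurable_funM p_meas _.
apply: (@measurableT_comp _ _ _ _ _ _ (@GRing.inv R)); first exact: measurable_invr.
exact: f_meas.
Qed.

Lemma eq_off_axis_line (R : realType) (n : nat) (i : 'I_n) (r s : 'rV[R]_n) :
  (forall j, j != i -> r 0 j = s 0 j) -> r = (r 0 i - s 0 i) *: unitv i + s.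
Proof.
move=> hr; apply/rowP => j; rewrite !mxE; have [->|ji] := eqVneq j i.
  by rewrite eqxx mulr1 subrK.
by rewrite andbF mulr0 add0r hr.
Qed.

Lemma integral_partial_eq0 (R : realType) (d : measure_display) (Y : measurableType d)
  (mu : {measure set Y -> \bar R}) (n : nat) (f : Y -> 'rV[R]_n -> R) i s :
  (forall s, (\int[mu]_y (f y s)%:E = 1)%E) ->
  mu.-integrable setT (fun y => (partial i (f y) s)%:E) ->
  is_derive s (unitv i) (fun s' => Rintegral mu setT (fun y => f y s'))
    (Rintegral mu setT (fun y => partial i (f y) s)) ->
  (\int[mu]_y (partial i (f y) s)%:E = 0)%E.
Proof.
move=> f1 p_int [_].
have -> : (fun s' => Rintegral mu setT (fun y => f y s')) = cst 1.
  by apply/funext => s'; rewrite /Rintegral f1.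
rewrite derive_cst => p0.
by rewrite -[LHS]fineK ?integrable_fin_num // -/(Rintegral _ _ _) -p0.
Qed.

Unset Implicit Arguments.

Theorem proposition5 (R : realType) (d : measure_display) (Y : measurableType d)
  (mu : {measure set Y -> \bar R}) (n : nat) (f : Y -> 'rV[R]_n -> R)
  (hf : regular_model mu f) (i : 'I_n) (s r : 'rV[R]_n)
  (hr : forall j : 'I_n, j != i -> r 0 j = s 0 j) :
  let E := (\int[mu]_y ((f y s) * score f i r y)%:E)%E in
  [/\ r 0 i < s 0 i -> (0 < E)%E,
      r 0 i = s 0 i -> E = 0%E &
      s 0 i < r 0 i -> (E < 0)%E].
Proof.
move=> E; case: hf => f_ge0 [f_meas [f_int1 [f_twice [f_supp [f_conc f_swap]]]]].
have f_diff y z : differentiable (f y) z by case: (f_twice y z).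
have r_line := eq_off_axis_line hr; set t := r 0 i - s 0 i in r_line.
have [p_int p_deriv] := f_swap s i.
have p_eq0 := integral_partial_eq0 f_int1 p_int p_deriv.
have p_score y : partial i (f y) s = f y s * score f i (0 *: unitv i + s) y.
  by rewrite scale0r add0r density_mul_score.
have w_gt0 : (0 < \int[mu]_y (f y s)%:E)%E by rewrite f_int1.
have w_int : mu.-integrable setT (fun y => (f y s)%:E).
  by apply: (ge0_integrable (w := f^~ s)) => //=; rewrite f_int1 ltry.
have g_meas : measurable_fun setT (fun y => f y s * score f i r y).
  apply: measurable_funM (f_meas s) (measurable_score f_ge0 f_diff f_supp (f_meas r) _).
  exact/measurable_EFinP/(measurable_int mu (f_swap r i).1).
rewrite /E; split => [rs | rs | sr].
- rewrite -p_eq0.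
  apply: (integral_lt_of_gt_on_support (w := f^~ s) p_int g_meas w_int) => // y.
    by rewrite p_score r_line density_mul_score_le // /t subr_le0 ltW.
  by move=> fys; rewrite p_score r_line ltr_pM2l // score_decr // /t subr_lt0.
- have -> : r = s by rewrite r_line /t rs subrr scale0r add0r.
  by rewrite -p_eq0; apply: eq_integral => y _; rewrite density_mul_score.
- rewrite -p_eq0.
  apply: (integral_gt_of_lt_on_support (w := f^~ s) p_int g_meas w_int) => // y.
    by rewrite p_score r_line density_mul_score_le // /t subr_ge0 ltW.
  by move=> fys; rewrite p_score r_line ltr_pM2l // score_decr // /t subr_gt0.
Qed.
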